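(* For every integer $n\ge 1$, let $M_T(n)$ denote the maximum modulus of an independence root over all trees on $n$ vertices. Then $$M_T(n)\ge \begin{cases} 2^{\frac{n-1}{2}} & \text{if } n \text{ is odd},\\ 2^{\frac{n-6}{2}} & \text{if } n \text{ is even}.\end{cases}$$
   Context: For a finite simple graph $G$, the independence polynomial is $i(G,x)=\sum_{k=0}^{\alpha(G)} i_k x^k$, where $i_k$ is the number of independent sets of size $k$ in $G$ (with $i_0=1$) and $\alpha(G)$ is the independence number. Its complex roots are the independence roots of $G$. *)

From HB Require Import structures.
From mathcomp Require Import all_boot all_order all_algebra all_field.
Set Implicit Arguments. Unset Strict Implicit. Unset Printing Implicit Defensive.
Import Order.TTheory GRing.Theory Num.Theory.
Local Open Scope ring_scope.

Definition simple_graph (T : finType) (e : rel T) : Prop :=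
  symmetric e /\ irreflexive e.

Definition connected_graph (T : finType) (e : rel T) : Prop :=
  forall x y : T, connect e x y.

(* a cycle: a closed walk x, s_1, ..., s_k, x with x :: s duplicate-free,
   of length at least 3 *)
Definition has_cycle (T : finType) (e : rel T) : Prop :=
  exists (x : T) (s : seq T), [/\ (2 <= size s)%N, uniq (x :: s) & cycle e (x :: s)].

Definition is_tree (T : finType) (e : rel T) : Prop :=
  [/\ simple_graph e, connected_graph e & ~ has_cycle e].

Definition independent (T : finType) (e : rel T) (S : {set T}) : bool :=
  [forall x in S, forall y in S, ~~ e x y].

Definition indep_poly (T : finType) (e : rel T) : {poly algC} :=
  \sum_(S : {set T} | independent e S) 'X^#|S|.

Definition MT_bound (n : nat) : algC :=
  if odd n then 2 ^+ ((n - 1) %/ 2)%N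
  else 2 ^ (((n%:Z - 6) %/ 2)%Z).

From HB Require Import structures.
From mathcomp Require Import all_boot all_order all_algebra all_field.
From mathcomp Require Import zify ring lra.
Set Implicit Arguments. Unset Strict Implicit. Unset Printing Implicit Defensive.
Import Order.TTheory GRing.Theory Num.Theory.
Local Open Scope ring_scope.

(* The witnesses are spiders.  Let S_k be the spider with k legs of
   length 2 (2k + 1 vertices); deleting its centre, respectively the closed
   neighbourhood of its centre, gives i(S_k, x) = (1 + 2x)^k + x (1 + x)^k.
   At t = 2^k we have t (t - 1)^k = (2t - 2)^k <= (2t - 1)^k, and at
   t = 3^k + 1 we have (2t - 1)^k <= (3t - 3)^k = (t - 1)^(k+1) <= t (t - 1)^k,
   so (-1)^k i(S_k, -t) changes sign on [2^k, 3^k + 1] and i(S_k) has a real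
   root <= -2^k.  For 2k + 2 vertices, hang one more leaf at the middle vertex
   of a leg: for k >= 4 the same argument at t = 2^(k-2) and t = 3^(k-1) + 1
   applies, and the cases k <= 3 are settled by small explicit spiders. *)

Lemma unique_lower_neighbour_acyclic (T : finType) (e : rel T) (h : T -> nat) :
  symmetric e -> injective h ->
  (forall x y z, e x y -> e x z -> (h y < h x)%N -> (h z < h x)%N -> y = z) ->
  ~ has_cycle e.
Proof.
move=> e_sym h_inj lower_uniq [x [s [s_ge2 uniq_xs cycle_xs]]].
(* Both cycle-neighbours of the h-maximal vertex m are lower neighbours of m. *)
have [m m_in m_max] := @arg_maxnP T x (fun y => y \in x :: s) h (mem_head x s).
have [i [|a [|c s']] rot_xs] := rot_to m_in;
  try by have := size_rot i (x :: s); rewrite rot_xs /=; lia.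
have lt_m y : y \in a :: c :: s' -> y != m -> (h y < h m)%N.
  move=> y_in y_m; rewrite ltn_neqAle (inj_eq h_inj) y_m; apply: m_max.
  by rewrite -(mem_rot i) rot_xs inE y_in orbT.
have {uniq_xs} : uniq (m :: a :: c :: s') by rewrite -rot_xs rot_uniq.
move=> /and3P[m_acs a_cs _].
have {cycle_xs} : cycle e (m :: a :: c :: s') by rewrite -rot_xs rot_cycle.
rewrite /= rcons_path => /and3P[e_ma _ /andP[_ e_bm]].
set b := last c s' in e_bm; have b_cs : b \in c :: s' := mem_last c s'.
have a_m : a != m by apply: contraNneq m_acs => ->; apply: mem_head.
have b_m : b != m by apply: contraNneq m_acs => <-; rewrite inE b_cs orbT.
have a_b : a != b by apply: contraNneq a_cs => ->.
have e_mb : e m b by rewrite e_sym.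
have a_lt : (h a < h m)%N by rewrite lt_m ?mem_head.
have b_lt : (h b < h m)%N by rewrite lt_m // inE b_cs orbT.
by move: a_b; rewrite (lower_uniq m a b e_ma e_mb a_lt b_lt) eqxx.
Qed.

Section ParentTree.
Variables (N : nat) (par : nat -> nat).
Hypothesis par_lt : forall j, (0 < j)%N -> (par j < j)%N.

Definition parent_rel : rel 'I_N.+1 := fun x y =>
  ((x != 0 :> nat) && (y == par x :> nat)) || ((y != 0 :> nat) && (x == par y :> nat)).

Lemma parent_rel_sym : symmetric parent_rel.
Proof. by move=> x y; rewrite /parent_rel orbC. Qed.

Lemma parent_rel_irr : irreflexive parent_rel.
Proof.
move=> x; rewrite /parent_rel orbb; apply/negP => /andP[x_nz /eqP x_par].
by have := @par_lt x; rewrite lt0n x_nz -x_par ltnn => /(_ isT).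
Qed.

Lemma parent_rel_lower (x y : 'I_N.+1) :
  parent_rel x y -> (y < x)%N -> val y = par x.
Proof.
case/orP=> /andP[y_nz /eqP xy] y_x //.
by have := ltn_trans (par_lt _) y_x; rewrite lt0n y_nz -xy ltnn => /(_ isT).
Qed.

Lemma connect_parent_rel_root (x : 'I_N.+1) : connect parent_rel x ord0.
Proof.
have [m] := ubnP (x : nat); elim: m x => // m IH x x_m.
have [x0 | x_nz] := eqVneq (x : nat) 0; first by rewrite (_ : x = ord0) //; apply: val_inj.
have par_x : (par x < x)%N by apply: par_lt; rewrite lt0n.
have x_par : parent_rel x (Ordinal (ltn_trans par_x (ltn_ord x))).
  by rewrite /parent_rel x_nz eqxx.
by apply: connect_trans (connect1 x_par) (IH _ _); rewrite /=; lia.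
Qed.

Lemma parent_rel_tree : is_tree parent_rel.
Proof.
split; first by split; [exact: parent_rel_sym | exact: parent_rel_irr].
  move=> x y; apply: connect_trans (connect_parent_rel_root x) _.
  by rewrite (sym_connect_sym parent_rel_sym) connect_parent_rel_root.
apply: (unique_lower_neighbour_acyclic parent_rel_sym val_inj).
move=> x y z xy xz y_x z_x; apply: val_inj.
by rewrite (parent_rel_lower xy y_x) (parent_rel_lower xz z_x).
Qed.

End ParentTree.

Section IndepPolyOn.
Variables (T : finType) (e : rel T).
Hypotheses (e_sym : symmetric e) (e_irr : irreflexive e).

Definition indep_poly_on (U : {set T}) : {poly algC} :=
  \sum_(S : {set T} | (S \subset U) && independent e S) 'X^#|S|.

Lemma indep_poly_setT : indep_poly e = indep_poly_on [set: T].
Proof. by apply: eq_bigl => S; rewrite subsetT. Qed.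

Lemma independentP (S : {set T}) :
  reflect {in S &, forall x y, ~~ e x y} (independent e S).
Proof.
apply: (iffP forall_inP) => [S_ind x y x_S | S_ind x x_S].
  exact: (forall_inP (S_ind x x_S)).
by apply/forall_inP => y; apply: S_ind.
Qed.

Lemma independentU1 v (S : {set T}) :
  independent e (v |: S) = independent e S && [forall y in S, ~~ e v y].
Proof.
apply/independentP/andP => [vS_ind | [/independentP S_ind /forall_inP v_S]].
  split; first by apply/independentP => x y x_S y_S; apply: vS_ind; rewrite inE ?x_S ?y_S orbT.
  by apply/forall_inP => y y_S; apply: vS_ind; rewrite !inE ?eqxx ?y_S ?orbT.
move=> x y; rewrite !inE => /predU1P[-> | x_S] /predU1P[-> | y_S].
- by rewrite e_irr.
- exact: v_S.
- by rewrite e_sym v_S.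
- exact: S_ind.
Qed.

Lemma indep_poly_on0 : indep_poly_on set0 = 1.
Proof.
rewrite /indep_poly_on (eq_bigl (pred1 set0)) ?big_pred1_eq ?cards0 ?expr0 // => S.
rewrite subset0 /=; case: eqP => // ->.
by apply/independentP => x; rewrite inE.
Qed.

Lemma indep_poly_on_del v (U : {set T}) : v \in U ->
  indep_poly_on U =
    indep_poly_on (U :\ v) + 'X * indep_poly_on (U :\: (v |: [set w | e v w])).
Proof.
move=> v_U; rewrite /indep_poly_on (bigID (fun S : {set T} => v \in S)) /= addrC.
congr (_ + _); first by apply: eq_bigl => S; rewrite subsetD1 andbAC.
rewrite mulr_sumr (reindex_onto (fun S => v |: S) (fun S => S :\ v)); last first.
  by move=> S /andP[_ v_S]; rewrite setD1K.
apply: eq_big => [S | S /andP[_ /eqP <-]]; last by rewrite cardsU1 !inE eqxx exprS.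
have -> : (S \subset U :\: (v |: [set w | e v w])) =
    [&& S \subset U, v \notin S & [forall y in S, ~~ e v y]].
  apply/subsetP/and3P => [sub | [/subsetP S_U v_S /forall_inP nb] y y_S].
    split.
    - by apply/subsetP => y /sub /setDP[].
    - by apply/negP => /sub; rewrite !inE eqxx.
    - by apply/forall_inP => y /sub; rewrite !inE negb_or => /andP[/andP[]].
  by rewrite !inE negb_or nb // S_U // !andbT; apply: contraNneq v_S => <-.
rewrite independentU1 subUset sub1set v_U setU11 andbT.
have [v_S | v_S] := boolP (v \in S).
  rewrite andbF; case: eqP => [vS_S | _]; last by rewrite andbF.
  by move: v_S; rewrite -vS_S !inE eqxx.
by rewrite setU1K //= eqxx andbT andbA andbAC.
Qed.

Lemma indep_poly_onU (U W : {set T}) :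
  [disjoint U & W] -> {in U & W, forall u w, ~~ e u w} ->
  indep_poly_on (U :|: W) = indep_poly_on U * indep_poly_on W.
Proof.
have [m] := ubnP #|U|; elim: m U => // m IH U U_m UW no_edge.
have [-> | [v v_U]] := set_0Vmem U; first by rewrite set0U indep_poly_on0 mul1r.
have IHsub (A : {set T}) : A \subset U -> (#|A| < #|U|)%N ->
    indep_poly_on (A :|: W) = indep_poly_on A * indep_poly_on W.
  move=> /subsetP A_U A_lt; apply: IH; first exact: leq_trans A_lt _.
    by apply: disjointWl UW; apply/subsetP.
  by move=> u w /A_U; apply: no_edge.
set Nv := v |: [set w | e v w].
have W_v : [disjoint W & [set v]] by rewrite disjoint_sym disjoints1 (disjointFr UW v_U).
have W_Nv : [disjoint W & Nv].
  rewrite disjoint_sym disjoints_subset; apply/subsetP => w; rewrite !inE.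
  case/predU1P=> [-> | vw]; first by rewrite (disjointFr UW v_U).
  by apply: contraL vw => w_W; apply: no_edge.
have Uv_lt : (#|U :\ v| < #|U|)%N by rewrite (cardsD1 v U) v_U.
have UNv_Uv : U :\: Nv \subset U :\ v by apply: setDS; rewrite sub1set setU11.
rewrite (indep_poly_on_del (v := v)) ?inE ?v_U // (indep_poly_on_del v_U).
rewrite !setDUl (setDidPl W_v) (setDidPl W_Nv) !IHsub ?mulrDl ?mulrA ?subsetDl //.
exact: leq_ltn_trans (subset_leq_card UNv_Uv) Uv_lt.
Qed.

Lemma indep_poly_on1 a : indep_poly_on [set a] = 1 + 'X.
Proof.
rewrite (indep_poly_on_del (set11 a)) setDv.
have -> : [set a] :\: (a |: [set w | e a w]) = set0.
  by apply/eqP; rewrite setD_eq0 sub1set setU11.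
by rewrite indep_poly_on0 mulr1.
Qed.

Lemma indep_poly_on_edge a b : e a b -> indep_poly_on [set a; b] = 1 + 'X *+ 2.
Proof.
move=> ab; have a_b : a != b by apply: contraTneq ab => ->; rewrite e_irr.
rewrite (indep_poly_on_del (setU11 a [set b])) setU1K ?inE //.
have -> : [set a; b] :\: (a |: [set w | e a w]) = set0.
  by apply/eqP; rewrite setD_eq0 setUS // sub1set inE ab.
by rewrite indep_poly_on1 indep_poly_on0 mulr1 -addrA -mulr2n.
Qed.

Lemma indep_poly_on_coedge a b : a != b -> ~~ e a b ->
  indep_poly_on [set a; b] = (1 + 'X) ^+ 2.
Proof.
move=> a_b ab; rewrite indep_poly_onU ?indep_poly_on1 ?expr2 ?disjoints1 ?inE //.
by move=> u w; rewrite !inE => /eqP-> /eqP->.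
Qed.

Lemma indep_poly_on_path3 a b c : e a b -> e a c -> ~~ e b c -> b != c ->
  indep_poly_on [set a; b; c] = (1 + 'X) ^+ 2 + 'X.
Proof.
move=> ab ac bc b_c.
have [a_b a_c] : a != b /\ a != c.
  by split; [apply: contraTneq ab | apply: contraTneq ac] => ->; rewrite e_irr.
rewrite -setUA (indep_poly_on_del (setU11 a _)) setU1K ?inE ?negb_or ?a_b //.
have -> : (a |: [set b; c]) :\: (a |: [set w | e a w]) = set0.
  by apply/eqP; rewrite setD_eq0 setUS // subUset !sub1set !inE ab ac.
by rewrite indep_poly_on_coedge ?indep_poly_on0 ?mulr1.
Qed.

End IndepPolyOn.

Definition spider_poly (R : nzRingType) (p q : {poly R}) j : {poly R} :=
  (1 + 'X *+ 2) ^+ j * p + 'X * ((1 + 'X) ^+ j * q).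

Lemma map_spider_poly (R S : nzRingType) (f : {rmorphism R -> S}) (p q : {poly R}) j :
  map_poly f (spider_poly p q j) = spider_poly (map_poly f p) (map_poly f q) j.
Proof. by rewrite /spider_poly !(rmorphD, rmorphM, rmorphXn, rmorphMn, rmorph1) /= map_polyX. Qed.

Lemma spider_poly_at_opp (R : comNzRingType) (p q : {poly R}) j t :
  (-1) ^+ j * (spider_poly p q j).[- t] =
    (t *+ 2 - 1) ^+ j * p.[- t] - t * (t - 1) ^+ j * q.[- t].
Proof.
have sign2 : (-1) ^+ j * (-1) ^+ j = 1 :> R by rewrite -exprMn mulrNN mulr1 expr1n.
rewrite /spider_poly !(hornerD, hornerM, hornerMn, horner_exp, hornerX, hornerC).
rewrite (_ : 1 + (- t) *+ 2 = -1 * (t *+ 2 - 1)); last by ring.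
rewrite (_ : 1 + - t = -1 * (t - 1)); last by ring.
rewrite !exprMn; transitivity ((-1) ^+ j * (-1) ^+ j *
  ((t *+ 2 - 1) ^+ j * p.[- t] - t * (t - 1) ^+ j * q.[- t])); first by ring.
by rewrite sign2 mul1r.
Qed.

(* [spider N k a] has vertices 0..N, with N = 2k or N = 2k + 1: vertex 0 is
   the centre, j hangs at 0 and k + j hangs at j for 1 <= j <= k, and the
   extra vertex 2k + 1 (if N = 2k + 1) hangs at a. *)
Definition spider_par k a j : nat :=
  if (j <= k)%N then 0%N else if (j <= 2 * k)%N then (j - k)%N else a.

Definition spider N k a := @parent_rel N (spider_par k a).
Arguments spider : clear implicits.

Lemma spider_par_cases k a j :
  [/\ (j <= k)%N & spider_par k a j = 0%N] \/
  [/\ (k < j <= 2 * k)%N & spider_par k a j = (j - k)%N] \/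
  [/\ (2 * k < j)%N & spider_par k a j = a].
Proof. by rewrite /spider_par; case: ifP => le_jk; [|case: ifP => le_j2k]; lia. Qed.

Lemma spider_par_lt k a : (a <= 2 * k)%N -> forall i, (0 < i)%N -> (spider_par k a i < i)%N.
Proof. by move=> a_le i; have := spider_par_cases k a i; lia. Qed.

Lemma spider_sym N k a : symmetric (spider N k a).
Proof. exact: parent_rel_sym. Qed.

Lemma spider_irr N k a : (a <= 2 * k)%N -> irreflexive (spider N k a).
Proof. by move=> a_le; apply: parent_rel_irr (spider_par_lt a_le). Qed.

Lemma spider_tree N k a : (a <= 2 * k)%N -> is_tree (spider N k a).
Proof. by move=> a_le; apply: parent_rel_tree (spider_par_lt a_le). Qed.

#[local] Hint Extern 0 (symmetric (spider _ _ _)) => exact: spider_sym : core.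
#[local] Hint Extern 0 (irreflexive (spider _ _ _)) => apply: spider_irr; lia : core.

Ltac vertex_lia :=
  rewrite /spider /parent_rel ?inE -?val_eqE /= ?inordK;
  repeat match goal with |- context [spider_par ?k ?a ?i] =>
    have := spider_par_cases k a i; generalize (spider_par k a i); intro end;
  lia.

Ltac set_lia := apply/setP => x; have := ltn_ord x; vertex_lia.

Ltac disjoint_lia :=
  rewrite disjoints_subset; apply/subsetP => x; have := ltn_ord x; vertex_lia.

Ltac no_edge_lia := move=> u w; have := ltn_ord u; have := ltn_ord w; vertex_lia.

Section Spider.
Variables (N k a j : nat).
Hypotheses (N_ge : (2 * k <= N)%N) (N_le : (N <= (2 * k).+1)%N) (a_le : (a <= 2 * k)%N).

Definition legs m := [set x : 'I_N.+1 | (0 < x <= m)%N || (k < x <= k + m)%N].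
Definition leg_ends m := [set x : 'I_N.+1 | (k < x <= k + m)%N].

Lemma indep_poly_on_legs m : (m <= k)%N ->
  indep_poly_on (spider N k a) (legs m) = (1 + 'X *+ 2) ^+ m.
Proof.
elim: m => [|m IH] m_k.
  by rewrite expr0 -(indep_poly_on0 (spider N k a)); congr indep_poly_on; set_lia.
rewrite (_ : legs m.+1 = legs m :|: [set inord m.+1; inord (k + m.+1)]); last by set_lia.
rewrite indep_poly_onU ?indep_poly_on_edge ?IH ?exprSr //; try exact: ltnW.
- by vertex_lia.
- by disjoint_lia.
- by no_edge_lia.
Qed.

Lemma indep_poly_on_leg_ends m : (m <= k)%N ->
  indep_poly_on (spider N k a) (leg_ends m) = (1 + 'X) ^+ m.
Proof.
elim: m => [|m IH] m_k.
  by rewrite expr0 -(indep_poly_on0 (spider N k a)); congr indep_poly_on; set_lia.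
rewrite (_ : leg_ends m.+1 = leg_ends m :|: [set inord (k + m.+1)]); last by set_lia.
rewrite indep_poly_onU ?indep_poly_on1 ?IH ?exprSr //; try exact: ltnW.
- by disjoint_lia.
- by no_edge_lia.
Qed.

Definition spider_rest := [set x : 'I_N.+1 | (j < x <= k)%N || (k + j < x)%N].
Definition spider_rest_far :=
  [set x : 'I_N.+1 | (k + j < x)%N && (spider_par k a x != 0)%N].

Hypotheses (j_le : (j <= k)%N) (a_off : ~~ ((0 < a <= j)%N || (k < a <= k + j)%N)).

Lemma indep_poly_spider : indep_poly (spider N k a) =
  spider_poly (indep_poly_on (spider N k a) spider_rest)
              (indep_poly_on (spider N k a) spider_rest_far) j.
Proof.
rewrite indep_poly_setT (indep_poly_on_del _ _ (in_setT ord0)) //.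
rewrite /spider_poly -(indep_poly_on_legs j_le) -(indep_poly_on_leg_ends j_le).
rewrite -!indep_poly_onU //.
- by congr (_ + _ * _); congr indep_poly_on; set_lia.
- by disjoint_lia.
- by no_edge_lia.
- by disjoint_lia.
- by no_edge_lia.
Qed.

End Spider.

Lemma indep_poly_spider_odd k : indep_poly (spider (2 * k) k 0) = spider_poly 1 1 k.
Proof.
rewrite (indep_poly_spider (j := k)); try by vertex_lia.
have -> : spider_rest (2 * k) k k = set0 by set_lia.
have -> : spider_rest_far (2 * k) k 0 k = set0 by set_lia.
by rewrite indep_poly_on0.
Qed.

Lemma indep_poly_spider_centre_leaf k :
  indep_poly (spider (2 * k).+1 k 0) = spider_poly (1 + 'X) 1 k.
Proof.
rewrite (indep_poly_spider (j := k)); try by vertex_lia.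
have -> : spider_rest (2 * k).+1 k k = [set inord (2 * k).+1] by set_lia.
have -> : spider_rest_far (2 * k).+1 k 0 k = set0 by set_lia.
by rewrite indep_poly_on0 indep_poly_on1.
Qed.

Lemma indep_poly_spider_fork j :
  indep_poly (spider (2 * j.+1).+1 j.+1 j.+1) =
    spider_poly ((1 + 'X) ^+ 2 + 'X) ((1 + 'X) ^+ 2) j.
Proof.
rewrite (indep_poly_spider (j := j)); try by vertex_lia.
have -> : spider_rest (2 * j.+1).+1 j.+1 j =
    [set inord j.+1; inord (2 * j.+1); inord (2 * j.+1).+1] by set_lia.
have -> : spider_rest_far (2 * j.+1).+1 j.+1 j.+1 j =
    [set inord (2 * j.+1); inord (2 * j.+1).+1] by set_lia.
by rewrite indep_poly_on_path3 ?indep_poly_on_coedge //; vertex_lia.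
Qed.

Lemma indep_poly_spider_long_leg j :
  indep_poly (spider (2 * j.+1).+1 j.+1 (2 * j.+1)) =
    spider_poly ((1 + 'X) ^+ 2 + 'X) (1 + 'X *+ 2) j.
Proof.
rewrite (indep_poly_spider (j := j)); try by vertex_lia.
have -> : spider_rest (2 * j.+1).+1 j.+1 j =
    [set inord (2 * j.+1); inord j.+1; inord (2 * j.+1).+1] by set_lia.
have -> : spider_rest_far (2 * j.+1).+1 j.+1 (2 * j.+1) j =
    [set inord (2 * j.+1); inord (2 * j.+1).+1] by set_lia.
by rewrite indep_poly_on_path3 ?indep_poly_on_edge //; vertex_lia.
Qed.

Section SpiderPolySigns.
Variable R : realFieldType.
Implicit Types (t : R) (j : nat).

Lemma pow2_le_pow3 j : (2 : R) ^+ j <= 3 ^+ j + 1.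
Proof.
have : (2 : R) ^+ j <= 3 ^+ j by apply: lerXn2r; rewrite ?nnegrE; lra.
by lra.
Qed.

Lemma ler_exp_pow3 j t : t = 3 ^+ j + 1 -> (t *+ 2 - 1) ^+ j <= (t - 1) ^+ j.+1.
Proof.
move=> ->; rewrite exprS addrK -exprMn.
have : 1 <= (3 : R) ^+ j by apply: exprn_ege1; lra.
by move=> pow3_ge1; apply: lerXn2r; rewrite ?nnegrE; lra.
Qed.

Lemma spider_poly_odd_sign_pow2 k :
  0 <= (-1) ^+ k * (spider_poly 1 1 k : {poly R}).[- 2 ^+ k].
Proof.
rewrite spider_poly_at_opp !hornerC !mulr1; set t := 2 ^+ k.
have t_ge1 : 1 <= t by apply: exprn_ege1; lra.
have -> : t * (t - 1) ^+ k = (t *+ 2 - 2) ^+ k.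
  by rewrite (_ : t *+ 2 - 2 = 2 * (t - 1)) ?exprMn //; ring.
by rewrite subr_ge0; apply: lerXn2r; rewrite ?nnegrE; lra.
Qed.

Lemma spider_poly_odd_sign_pow3 k :
  (-1) ^+ k * (spider_poly 1 1 k : {poly R}).[- (3 ^+ k + 1)] <= 0.
Proof.
have pow3_ge1 : 1 <= (3 : R) ^+ k by apply: exprn_ege1; lra.
rewrite spider_poly_at_opp !hornerC !mulr1; set t := 3 ^+ k + 1.
have := ler_exp_pow3 (erefl t); rewrite exprS.
have : 0 <= (t - 1) ^+ k by apply: exprn_ge0; rewrite /t; lra.
rewrite /t; nra.
Qed.

Let P3 : {poly R} := (1 + 'X) ^+ 2 + 'X.
Let P2 : {poly R} := (1 + 'X) ^+ 2.

Lemma spider_poly_fork_sign_pow2 i : (2 <= i)%N ->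
  0 <= (-1) ^+ i.+1 * (spider_poly P3 P2 i.+1).[- 2 ^+ i].
Proof.
move=> i_ge2; rewrite spider_poly_at_opp /P3 /P2 !(hornerD, horner_exp, hornerX, hornerC).
set t := 2 ^+ i; set u := t * (t - 1) ^+ i.+1.
have t_ge4 : 4 <= t.
  have pow2_ge1 : 1 <= (2 : R) ^+ (i - 2) by apply: exprn_ege1; lra.
  by rewrite /t -(subnKC i_ge2) exprD expr2; nra.
have u_ge0 : 0 <= u by apply: mulr_ge0; [lra | apply: exprn_ge0; lra].
have u2 : u *+ 2 = (t *+ 2 - 2) ^+ i.+1.
  by rewrite /u (_ : t *+ 2 - 2 = 2 * (t - 1)) ?exprMn ?exprS -/t; ring.
have A_ge : 0 <= (t *+ 2 - 1) ^+ i.+1 - u *+ 2.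
  by rewrite u2 subr_ge0; apply: lerXn2r; rewrite ?nnegrE; lra.
have c_ge0 : 0 <= (1 - t) ^+ 2 - t by rewrite expr2; nra.
have c_ge : 0 <= ((1 - t) ^+ 2 - t) *+ 2 - (1 - t) ^+ 2 by rewrite expr2; nra.
have := mulr_ge0 A_ge c_ge0; have := mulr_ge0 u_ge0 c_ge.
lra.
Qed.

Lemma spider_poly_fork_sign_pow3 j : (1 <= j)%N ->
  (-1) ^+ j * (spider_poly P3 P2 j).[- (3 ^+ j + 1)] <= 0.
Proof.
move=> j_ge1; have pow3_ge3 : 3 <= (3 : R) ^+ j.
  have pow3_ge1 : 1 <= (3 : R) ^+ (j - 1) by apply: exprn_ege1; lra.
  by rewrite -(subnKC j_ge1) exprD expr1; lra.
rewrite spider_poly_at_opp /P3 /P2 !(hornerD, horner_exp, hornerX, hornerC).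
set t := 3 ^+ j + 1; set D := (t - 1) ^+ j.
have t_ge4 : 4 <= t by rewrite /t; lra.
have D_ge0 : 0 <= D by apply: exprn_ge0; lra.
have A_le : 0 <= (t - 1) * D - (t *+ 2 - 1) ^+ j.
  by rewrite subr_ge0 -exprS ler_exp_pow3.
have c_ge0 : 0 <= (1 - t) ^+ 2 - t by rewrite expr2; nra.
have c_le : 0 <= t * (t - 1) - ((1 - t) ^+ 2 - t) by rewrite expr2; nra.
have t1D_ge0 : 0 <= (t - 1) * D by apply: mulr_ge0; lra.
have := mulr_ge0 A_le c_ge0; have := mulr_ge0 t1D_ge0 c_le.
rewrite expr2; lra.
Qed.

End SpiderPolySigns.

Lemma algR_poly_root_norm_ge (P : {poly algR}) m (t0 t1 : algR) : t0 <= t1 ->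
  0 <= (-1) ^+ m * P.[- t0] -> (-1) ^+ m * P.[- t1] <= 0 ->
  exists2 z : algC, root (map_poly algRval P) z & algRval t0 <= `|z|.
Proof.
move=> t01 P_t0 P_t1; have Nt01 : - t1 <= - t0 by rewrite lerN2.
have [x /andP[_ x_t0]] : exists2 x, - t1 <= x <= - t0 & root ((-1) ^+ m *: P) x.
  by apply: poly_ivt Nt01 _; rewrite !hornerZ P_t1 P_t0.
rewrite rootZ ?signr_eq0 // => x_root; exists (algRval x); first exact: rmorph_root.
rewrite -normrN; apply: le_trans (real_ler_norm _); first by rewrite lerNr.
by rewrite realN; apply: algRvalP.
Qed.

Definition tree_with_indep_root_ge n (b : algC) :=
  exists e : rel 'I_n, is_tree e /\ exists z : algC, root (indep_poly e) z /\ b <= `|z|.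

Lemma tree_with_indep_root_geW n (b b' : algC) :
  b' <= b -> tree_with_indep_root_ge n b -> tree_with_indep_root_ge n b'.
Proof.
move=> b'b [e [e_tree [z [z_root b_z]]]].
by exists e; split => //; exists z; split => //; apply: le_trans b_z.
Qed.

Lemma spider_indep_root N k a (z b : algC) : (a <= 2 * k)%N ->
  root (indep_poly (spider N k a)) z -> b <= `|z| -> tree_with_indep_root_ge N.+1 b.
Proof. by move=> a_le z_root b_z; exists (spider N k a); split; [exact: spider_tree | exists z]. Qed.

Lemma spider_indep_root_ge N k a (P : {poly algR}) m (t0 t1 : algR) : (a <= 2 * k)%N ->
  indep_poly (spider N k a) = map_poly algRval P -> t0 <= t1 ->
  0 <= (-1) ^+ m * P.[- t0] -> (-1) ^+ m * P.[- t1] <= 0 ->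
  tree_with_indep_root_ge N.+1 (algRval t0).
Proof.
move=> a_le iP t01 P_t0 P_t1; have [z z_root t0_z] := algR_poly_root_norm_ge t01 P_t0 P_t1.
by apply: (spider_indep_root a_le _ t0_z); rewrite iP.
Qed.

Lemma odd_spider_root k : tree_with_indep_root_ge (2 * k).+1 (2 ^+ k).
Proof.
have := @spider_indep_root_ge (2 * k) k 0 (spider_poly 1 1 k) k (2 ^+ k) (3 ^+ k + 1).
rewrite rmorphXn rmorph_nat; apply; rewrite ?pow2_le_pow3 //.
- by rewrite indep_poly_spider_odd map_spider_poly rmorph1.
- exact: spider_poly_odd_sign_pow2.
- exact: spider_poly_odd_sign_pow3.
Qed.

Lemma fork_spider_root i : (2 <= i)%N -> tree_with_indep_root_ge (2 * i.+2).+2 (2 ^+ i).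
Proof.
move=> i_ge2; pose P3 : {poly algR} := (1 + 'X) ^+ 2 + 'X.
have := @spider_indep_root_ge (2 * i.+2).+1 i.+2 i.+2
  (spider_poly P3 ((1 + 'X) ^+ 2) i.+1) i.+1 (2 ^+ i) (3 ^+ i.+1 + 1).
rewrite rmorphXn rmorph_nat; apply.
- by lia.
- rewrite indep_poly_spider_fork map_spider_poly.
  by rewrite !(rmorphD, rmorphXn, rmorph1) /= map_polyX.
- have := pow2_le_pow3 algR i.+1; have : (0 : algR) <= 2 ^+ i by apply: exprn_ge0.
  by rewrite exprS; lra.
- exact: spider_poly_fork_sign_pow2.
- exact: spider_poly_fork_sign_pow3.
Qed.

Lemma long_leg_spider_root : tree_with_indep_root_ge 8 2.
Proof.
pose P : {poly algR} := spider_poly ((1 + 'X) ^+ 2 + 'X) (1 + 'X *+ 2) 2.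
have := @spider_indep_root_ge 7 3 6 P 1 2 3; rewrite rmorph_nat; apply => //.
- rewrite (indep_poly_spider_long_leg 2) map_spider_poly.
  by rewrite !(rmorphD, rmorphXn, rmorphMn, rmorph1) /= map_polyX.
- by lra.
- by rewrite /P /spider_poly !(hornerD, hornerM, hornerMn, horner_exp, hornerX, hornerC); lra.
- by rewrite /P /spider_poly !(hornerD, hornerM, hornerMn, horner_exp, hornerX, hornerC); lra.
Qed.

Lemma centre_leaf_spider_root k : (0 < k)%N -> tree_with_indep_root_ge (2 * k).+2 1.
Proof.
move=> k_gt0; apply: (@spider_indep_root _ k 0 (-1)) => //; last by rewrite normrN normr1.
rewrite indep_poly_spider_centre_leaf /root /spider_poly.
rewrite !(hornerD, hornerM, hornerMn, horner_exp, hornerX, hornerC) addrN.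
by rewrite expr0n eqn0Ngt k_gt0 mulr0 mul0r mulr0 addr0.
Qed.

Lemma edge_root : tree_with_indep_root_ge 2 (2 ^ (-2)).
Proof.
apply: (@spider_indep_root 1 0 0 (- 2^-1)) => //.
  rewrite (indep_poly_spider_centre_leaf 0) /root /spider_poly.
  by rewrite !(hornerD, hornerM, hornerMn, horner_exp, hornerX, hornerC) /=; apply/eqP; field.
rewrite normrN ger0_norm ?invr_ge0 ?ler0n // -exprnN.
by rewrite lef_pV2 ?posrE ?exprn_gt0 ?ltr0n // expr2 -natrM ler_nat.
Qed.

Lemma MT_bound_odd k : MT_bound (2 * k).+1 = 2 ^+ k.
Proof. by rewrite /MT_bound /= oddM /= subn1 /= mulKn. Qed.

Lemma MT_bound_even k : MT_bound (2 * k).+2 = 2 ^ (k%:Z - 2).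
Proof. by rewrite /MT_bound /= oddM /= (_ : _ - 6 = (k%:Z - 2) * 2)%R ?mulzK //; lia. Qed.

Lemma even_spider_root k : tree_with_indep_root_ge (2 * k).+2 (2 ^ (k%:Z - 2)).
Proof.
case: k => [|[|[|[|i]]]].
- exact: edge_root.
- apply: tree_with_indep_root_geW (centre_leaf_spider_root _) => //.
  by rewrite (_ : 1%:Z - 2 = - 1%:Z)%R // -exprnN expr1 invf_le1 ?ltr0n // ler1n.
- exact: centre_leaf_spider_root.
- exact: long_leg_spider_root.
- exact: fork_spider_root.
Qed.

Theorem proposition3 (n : nat) : (1 <= n)%N ->
  exists e : rel 'I_n, is_tree e /\
    exists z : algC, root (indep_poly e) z /\ MT_bound n <= `|z|.
Proof.
move=> n_ge1; have [k [-> | ->]] : exists k, n = (2 * k).+1 \/ n = (2 * k).+2.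
  by exists (n.-1 %/ 2)%N; lia.
- by rewrite MT_bound_odd; apply: odd_spider_root.
- by rewrite MT_bound_even; apply: even_spider_root.
Qed.
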